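(* For every $(\varepsilon,\delta)\in(0,1)\times[0,\delta_0]$, $$\mathcal R^\ast(\varepsilon,\delta|p_{X_1X_2},p_{K_1K_2})\subseteq\mathcal R^{(\rm out)}(p_{X_1X_2},p_{K_1K_2}),$$ where $\mathcal R^{(\rm out)}(p_{X_1X_2},p_{K_1K_2}):=\mathcal R_{\rm sw}(p_{X_1X_2})$ if $\mathcal R_{\rm key}(p_{K_1K_2})\cap\mathcal R_{\rm sw}(p_{X_1X_2})\neq\emptyset$, and $:=\emptyset$ otherwise.
   Context: All logarithms are base 2. $\mathcal X_1,\mathcal X_2$ are finite fields. $(X_1,X_2)$ has joint pmf $p_{X_1X_2}$ on $\mathcal X_1\times\mathcal X_2$ and $(K_1,K_2)$ has joint pmf $p_{K_1K_2}$ on $\mathcal X_1\times\mathcal X_2$. For block length $n$, $(\mathbf X_1,\mathbf X_2)$ is i.i.d. with law $p^n_{X_1X_2}$ (source), $(\mathbf K_1,\mathbf K_2)$ is i.i.d. with law $p^n_{K_1K_2}$ (keys), and the keys are independent of the sources. A distributed source encryption system at block length $n$ consists of finite sets $\mathcal C_i^{(n)}$, encryption maps $\Phi_i^{(n)}:\mathcal X_i^n\times\mathcal X_i^n\to\mathcal C_i^{(n)}$ (key, plaintext) and a decryption map $\Psi^{(n)}:\mathcal X_1^n\times\mathcal X_2^n\times\mathcal C_1^{(n)}\times\mathcal C_2^{(n)}\to\mathcal X_1^n\times\mathcal X_2^n$, such that there exist maps $\phi_i^{(n)}:\mathcal X_i^n\to\mathcal M_i^{(n)}$ (finite $\mathcal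 M_i^{(n)}$) and $\psi^{(n)}$ with $\Psi^{(n)}(\mathbf k_1,\mathbf k_2,\Phi_1^{(n)}(\mathbf k_1,\mathbf x_1),\Phi_2^{(n)}(\mathbf k_2,\mathbf x_2))=\psi^{(n)}(\phi_1^{(n)}(\mathbf x_1),\phi_2^{(n)}(\mathbf x_2))$ for all keys and plaintexts. Ciphertexts: $C_i^{(n)}=\Phi_i^{(n)}(\mathbf K_i,\mathbf X_i)$. Correct decoding set $\mathcal D^{(n)}:=\{(\mathbf x_1,\mathbf x_2):\psi^{(n)}(\phi_1^{(n)}(\mathbf x_1),\phi_2^{(n)}(\mathbf x_2))=(\mathbf x_1,\mathbf x_2)\}$; error probability $p_{\rm e}:=\Pr[(\mathbf X_1,\mathbf X_2)\notin\mathcal D^{(n)}]$. Fix a constant $\delta_0>0$. For $(\varepsilon,\delta)\in(0,1)\times[0,\delta_0]$, $(R_1,R_2)$ is an $(\varepsilon,\delta)$-reliable and secure rate pair if there is a sequence of systems $\{(\Phi_1^{(n)},\Phi_2^{(n)},\Psi^{(n)})\}_{n\ge1}$ such that for every $\gamma>0$ there is $n_0$ with, for all $n\ge n_0$: $\frac1n\log|\mathcal C_i^{(n)}|\le R_i+\gamma$ ($i=1,2$), $p_{\rm e}\le\varepsilon$, and $I(C_1^{(n)}C_2^{(n)};\mathbf X_1\mathbf X_2)\le\delta$. $\mathcal R^\ast(\varepsilon,\delta|p_{X_1X_2},p_{K_1K_2})$ is the set of such pairs. $\mathcal R_{\rm sw}(p_{X_1X_2}):=\{(R_1,R_2):R_1\ge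 H(X_1|X_2),R_2\ge H(X_2|X_1),R_1+R_2\ge H(X_1X_2)\}$, $\mathcal R_{\rm key}(p_{K_1K_2}):=\{(R_1,R_2):R_1\le H(K_1),R_2\le H(K_2),R_1+R_2\le H(K_1K_2)\}$. *)

From HB Require Import structures.
From mathcomp Require Import all_boot all_order all_algebra.
From mathcomp Require Import all_classical all_reals all_analysis.
Set Implicit Arguments. Unset Strict Implicit. Unset Printing Implicit Defensive.
Import Order.TTheory GRing.Theory Num.Theory.
Local Open Scope ring_scope.
Local Open Scope classical_set_scope.

Section Defs.
Variable R : realType.

Definition log2 (x : R) : R := ln x / ln 2.

Definition is_pmf (T : finType) (p : T -> R) : Prop :=
  (forall x, 0 <= p x) /\ \sum_(x : T) p x = 1.

(* Shannon entropy (0 log 0 = 0 automatically since 0 * _ = 0) *)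
Definition entropy (T : finType) (p : T -> R) : R :=
  - \sum_(x : T) p x * log2 (p x).

Definition marg1 (A B : finType) (p : A * B -> R) (a : A) : R :=
  \sum_(b : B) p (a, b).
Definition marg2 (A B : finType) (p : A * B -> R) (b : B) : R :=
  \sum_(a : A) p (a, b).

Definition H1 (A B : finType) (p : A * B -> R) := entropy (marg1 p).
Definition H2 (A B : finType) (p : A * B -> R) := entropy (marg2 p).
Definition H12 (A B : finType) (p : A * B -> R) := entropy p.
Definition H1given2 (A B : finType) (p : A * B -> R) := H12 p - H2 p.
Definition H2given1 (A B : finType) (p : A * B -> R) := H12 p - H1 p.

Definition mutual_info (U V : finType) (P : U * V -> R) : R :=
  \sum_(uv : U * V) P uv * log2 (P uv / (marg1 P uv.1 * marg2 P uv.2)).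

Definition seqn (F : finType) (n : nat) := {ffun 'I_n -> F}.

Definition iid_pair (A B : finType) (p : A * B -> R) (n : nat)
  (xy : seqn A n * seqn B n) : R :=
  \prod_(i < n) p (xy.1 i, xy.2 i).

End Defs.

(* A distributed source encryption system at block length n.  The maps
   phi_i, psi whose existence is required are recorded as part of the data. *)
Unset Implicit Arguments.
Record system (F1 F2 : finType) (n : nat) := System {
  C1 : finType;
  C2 : finType;
  Phi1 : seqn F1 n -> seqn F1 n -> C1;   (* (key, plaintext) *)
  Phi2 : seqn F2 n -> seqn F2 n -> C2;
  Psi : seqn F1 n -> seqn F2 n -> C1 -> C2 -> seqn F1 n * seqn F2 n;
  M1 : finType;
  M2 : finType;
  phi1 : seqn F1 n -> M1;
  phi2 : seqn F2 n -> M2;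
  psi : M1 -> M2 -> seqn F1 n * seqn F2 n;
  sys_ok : forall k1 k2 x1 x2,
    Psi k1 k2 (Phi1 k1 x1) (Phi2 k2 x2) = psi (phi1 x1) (phi2 x2)
}.
Arguments C1 {F1 F2 n}. Arguments C2 {F1 F2 n}.
Arguments Phi1 {F1 F2 n}. Arguments Phi2 {F1 F2 n}. Arguments Psi {F1 F2 n}.
Arguments M1 {F1 F2 n}. Arguments M2 {F1 F2 n}.
Arguments phi1 {F1 F2 n}. Arguments phi2 {F1 F2 n}. Arguments psi {F1 F2 n}.
Set Implicit Arguments.

Section Perf.
Variable R : realType.
Variables (F1 F2 : finType).
Variables (pX pK : F1 * F2 -> R).

Definition correct (n : nat) (S : system F1 F2 n) (x : seqn F1 n * seqn F2 n) : bool :=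
  psi S (phi1 S x.1) (phi2 S x.2) == x.

Definition err_prob (n : nat) (S : system F1 F2 n) : R :=
  \sum_(x : seqn F1 n * seqn F2 n | ~~ correct S x) iid_pair pX x.

Definition joint_CX (n : nat) (S : system F1 F2 n)
  (cx : (C1 S * C2 S) * (seqn F1 n * seqn F2 n)) : R :=
  \sum_(k : seqn F1 n * seqn F2 n |
          (Phi1 S k.1 cx.2.1, Phi2 S k.2 cx.2.2) == cx.1)
     iid_pair pK k * iid_pair pX cx.2.

Definition leakage (n : nat) (S : system F1 F2 n) : R :=
  mutual_info (@joint_CX n S).

Definition Rstar (eps delta : R) : set (R * R) :=
  [set r | exists sys : forall n : nat, system F1 F2 n,
     forall gamma : R, 0 < gamma ->
     exists n0 : nat, forall n : nat, (n0 <= n)%N -> (0 < n)%N ->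
       [/\ log2 (#|C1 (sys n)|%:R) / n%:R <= r.1 + gamma,
           log2 (#|C2 (sys n)|%:R) / n%:R <= r.2 + gamma,
           err_prob (sys n) <= eps &
           leakage (sys n) <= delta]].

Definition Rsw : set (R * R) :=
  [set r | [/\ r.1 >= H1given2 pX, r.2 >= H2given1 pX & r.1 + r.2 >= H12 pX]].

Definition Rkey : set (R * R) :=
  [set r | [/\ r.1 <= H1 pK, r.2 <= H2 pK & r.1 + r.2 <= H12 pK]].

Definition Rout : set (R * R) :=
  if pselect (Rkey `&` Rsw !=set0) then Rsw else set0.

End Perf.

(* The converse is an information-spectrum counting argument.  For a letter
   weight [u] with cross entropy [h = E_p[-log u]], Chebyshev's inequality
   shows that the i.i.d. product [prod_i u(x_i)] lies between
   [2^(-n(h+eta))] and [2^(-n(h-eta))] with probability close to one.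

   Rates: with a fixed key and the other source revealed, a correctly decoded
   sequence is determined by its ciphertext, so the typical correctly decoded
   sequences, of probability at least [1 - eps - theta], number at most
   [|C_i| 2^(n(h-eta))]; hence [R_1 >= H(X1|X2)], [R_2 >= H(X2|X1)] and
   [R_1 + R_2 >= H(X1 X2)].

   Keys: for a fixed ciphertext, the same injectivity shows that the typical
   sources compatible with some typical key have mass at most
   [2^(-n(H(X) - H(K) - 2 eta))].  By the log-sum inequality the mutual
   information between ciphertexts and sources is then at least linear in
   [n(H(X) - H(K))], which bounded leakage forbids unless [H(X1|X2) <= H(K1)],
   [H(X2|X1) <= H(K2)] and [H(X1 X2) <= H(K1 K2)].  Together with
   subadditivity of entropy these inequalities give a common point of the
   Slepian-Wolf and key regions. *)

From Pilot Require Import Defs.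
From HB Require Import structures.
From mathcomp Require Import all_boot all_order all_algebra.
From mathcomp Require Import all_classical all_reals all_analysis.
From mathcomp Require Import ring lra.
Import Order.TTheory GRing.Theory Num.Theory.
Local Open Scope ring_scope.
(* MathComp's [seq] library also defines a [seqn]. *)
Notation seqn := Defs.seqn.
Set Implicit Arguments. Unset Strict Implicit. Unset Printing Implicit Defensive.

Section Log2.
Variable R : realType.

Lemma ln2_gt0 : 0 < ln (2 : R).
Proof. by apply: ln_gt0; rewrite ltr1n. Qed.

Lemma log2_1 : log2 (1 : R) = 0.
Proof. by rewrite /log2 ln1 mul0r. Qed.

Lemma log2M (x y : R) : 0 < x -> 0 < y -> log2 (x * y) = log2 x + log2 y.
Proof. by move=> hx hy; rewrite /log2 lnM ?posrE // mulrDl. Qed.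

Lemma log2_div (x y : R) : 0 < x -> 0 < y -> log2 (x / y) = log2 x - log2 y.
Proof. by move=> hx hy; rewrite /log2 ln_div ?posrE // mulrBl. Qed.

Lemma ler_log2 (x y : R) : 0 < x -> 0 < y -> (log2 x <= log2 y) = (x <= y).
Proof.
by move=> hx hy; rewrite /log2 ler_pM2r ?invr_gt0 ?ln2_gt0 // ler_ln ?posrE.
Qed.

Lemma ltr_log2 (x y : R) : 0 < x -> 0 < y -> (log2 x < log2 y) = (x < y).
Proof.
by move=> hx hy; rewrite /log2 ltr_pM2r ?invr_gt0 ?ln2_gt0 // ltr_ln ?posrE.
Qed.

Lemma log2_le0 (x : R) : 0 < x -> x <= 1 -> log2 x <= 0.
Proof.
move=> x0 x1; rewrite /log2 mulr_le0_ge0 ?ln_le0 //.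
by rewrite invr_ge0 ltW // ln2_gt0.
Qed.

Definition pow2 (y : R) : R := expR (y * ln 2).

Lemma pow2_gt0 y : 0 < pow2 y. Proof. exact: expR_gt0. Qed.

Lemma log2_pow2 y : log2 (pow2 y) = y.
Proof. by rewrite /log2 /pow2 expRK mulrK // unitfE gt_eqF // ln2_gt0. Qed.

Lemma pow2_log2 x : 0 < x -> pow2 (log2 x) = x.
Proof.
by move=> hx; rewrite /pow2 /log2 divrK ?unitfE ?gt_eqF ?ln2_gt0 // lnK ?posrE.
Qed.

Lemma log2_ge1V (z : R) : 0 < z -> (1 - z^-1) / ln 2 <= log2 z.
Proof.
move=> hz; rewrite /log2 ler_pM2r ?invr_gt0 ?ln2_gt0 //.
have h1 : -1 < z^-1 - 1 by rewrite -subr_gt0 opprK subrK invr_gt0.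
have := le_ln1Dx h1; rewrite addrC subrK lnV ?posrE //.
lra.
Qed.

Lemma xlog2x_ge (a : R) : 0 < a -> - (ln 2)^-1 <= a * log2 a.
Proof.
move=> ha; have l2 := @ln2_gt0.
have h : a * ((1 - a^-1) / ln 2) <= a * log2 a.
  by rewrite ler_wpM2l ?log2_ge1V // ltW.
have e : a * ((1 - a^-1) / ln 2) = a / ln 2 - (ln 2)^-1.
  by field; rewrite !gt_eqF.
have : 0 <= a / ln 2 by rewrite divr_ge0 // ltW.
lra.
Qed.

End Log2.
Arguments pow2 {R} y.

Section FiniteSums.
Variable R : realType.

Lemma ler_sum_subset (I : finType) (P Q : pred I) (F : I -> R) :
  (forall i, P i -> Q i) -> (forall i, Q i -> 0 <= F i) ->
  \sum_(i | P i) F i <= \sum_(i | Q i) F i.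
Proof.
move=> PQ F0; rewrite [X in _ <= X](bigID P) /=.
rewrite (eq_bigl P); last by move=> i; case: (boolP (P i)) => h; rewrite ?andbT ?andbF // PQ.
by rewrite lerDl sumr_ge0 // => i /andP [] /F0.
Qed.

Lemma ler_sum_support (I : finType) (P Q : pred I) (F : I -> R) :
  (forall i, 0 <= F i) -> (forall i, P i -> 0 < F i -> Q i) ->
  \sum_(i | P i) F i <= \sum_(i | Q i) F i.
Proof.
move=> F0 PQ; rewrite (bigID (fun i => 0 < F i)) /=.
rewrite [X in _ + X]big1 ?addr0; last first.
  by move=> i /andP [_ h]; apply/eqP; rewrite eq_le F0 andbT leNgt.
by apply: ler_sum_subset => // i /andP []; exact: PQ.
Qed.

Lemma sum_gt0_dominated (T : finType) (P Q : T -> R) (A : pred T) :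
  (forall t, 0 <= P t) -> (forall t, 0 <= Q t) ->
  (forall t, 0 < P t -> 0 < Q t) -> 0 < \sum_(t | A t) P t ->
  0 < \sum_(t | A t) Q t.
Proof.
move=> P0 Q0 PQ a0.
rewrite lt_def sumr_ge0 // andbT; apply/negP => /eqP bz.
have Qz := psumr_eq0P (fun t _ => Q0 t) bz.
suff Pz : forall t, A t -> P t = 0 by move: a0; rewrite big1 ?ltxx.
move=> t At; apply/eqP; rewrite eq_le P0 andbT leNgt; apply/negP => /PQ.
by rewrite Qz // ltxx.
Qed.

Lemma card_heavy_le (I : finType) (W : I -> R) (t : R) :
  (forall i, 0 <= W i) -> \sum_i W i <= 1 -> 0 < t ->
  #|[set i | t <= W i]|%:R * t <= 1.
Proof.
move=> W0 W1 t0; apply: le_trans W1.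
rewrite mulr_natl -sumr_const.
apply: (le_trans (y := \sum_(i in [set i | t <= W i]) W i)).
  by apply: ler_sum => i; rewrite inE.
exact: ler_sum_subset.
Qed.

Lemma sum_le_fibers (I Y : finType) (P : I -> R) (pi : I -> Y) (P2 : Y -> R)
  (tau : R) (E : {set I}) (M : nat) :
  (forall y, 0 <= P2 y) -> \sum_y P2 y <= 1 -> 0 <= tau ->
  (forall x, x \in E -> P x <= tau * P2 (pi x)) ->
  (forall y, #|[set x in E | pi x == y]| <= M)%N ->
  \sum_(x in E) P x <= M%:R * tau.
Proof.
move=> P20 P21 t0 hP hM.
apply: (le_trans (ler_sum _ hP)).
rewrite (partition_big pi xpredT) //=.
apply: (le_trans (y := \sum_y (tau * P2 y) * M%:R)).
  apply: ler_sum => y _.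
  rewrite (eq_bigr (fun=> tau * P2 y)); last by move=> x /andP [_ /eqP ->].
  rewrite sumr_const -[X in X <= _]mulr_natr ler_wpM2l ?mulr_ge0 // ler_nat.
  by apply: leq_trans (hM y); rewrite cardsE.
by rewrite -mulr_suml -mulr_sumr mulrC mulrA ler_piMr ?mulr_ge0.
Qed.

Lemma card_fiber_le_tags (O Y K : finType) (E : {set O}) (pi : O -> Y)
  (Ks : {set K}) (r : K -> O -> bool) :
  (forall x, x \in E -> exists2 k, k \in Ks & r k x) ->
  (forall k x x', x \in E -> x' \in E -> pi x = pi x' -> r k x -> r k x' -> x = x') ->
  forall y, (#|[set x in E | pi x == y]| <= #|Ks|)%N.
Proof.
move=> hE hinj y.
case: (set_0Vmem [set x in E | pi x == y]) => [->|[x0 _]]; first by rewrite cards0.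
pose h k := odflt x0 [pick z in [set z in E | pi z == y] | r k z].
apply: (leq_trans _ (leq_imset_card h Ks)).
apply: subset_leq_card; apply/fintype.subsetP => x.
rewrite inE => /andP [xE /eqP px].
have [k kin rx] := hE x xE.
apply/imsetP; exists k => //.
rewrite /h; case: pickP => /= [x' /andP [] | none].
  rewrite inE => /andP [x'E /eqP px'] rx'.
  by apply: (hinj k x x' xE x'E _ rx rx'); rewrite px px'.
by move: (none x); rewrite inE xE px eqxx rx.
Qed.

Lemma card_fiber_le_codom (O Y Z : finType) (E : {set O}) (pi : O -> Y) (f : O -> Z) :
  (forall x x', x \in E -> x' \in E -> pi x = pi x' -> f x = f x' -> x = x') ->
  forall y, (#|[set x in E | pi x == y]| <= #|Z|)%N.
Proof.
move=> hinj y.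
rewrite -(card_in_imset (f := f)); first exact: max_card.
move=> x x'; rewrite !inE => /andP [xE /eqP px] /andP [x'E /eqP px'] e.
by apply: hinj => //; rewrite px px'.
Qed.

End FiniteSums.

Section IidPair.
Variable R : realType.

Lemma sum_pair_seqn_prod (A B : finType) n (F : 'I_n -> A * B -> R) :
  \sum_(x : seqn A n * seqn B n) \prod_i F i (x.1 i, x.2 i) = \prod_i \sum_l F i l.
Proof.
rewrite -(pair_bigA _ (fun (x1 : seqn A n) (x2 : seqn B n) =>
   \prod_i F i (x1 i, x2 i))) /=.
under eq_bigr => x1 _ do rewrite -(bigA_distr_bigA (fun i b => F i (x1 i, b))).
rewrite /= -(bigA_distr_bigA (fun i a => \sum_b F i (a, b))).
apply: eq_bigr => i _; rewrite (pair_bigA _ (fun a b => F i (a, b))) /=.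
by apply: eq_bigr => -[a b].
Qed.

Variables (A B : finType) (p : A * B -> R).
Hypothesis hp : is_pmf p.

Lemma pmf_ge0 l : 0 <= p l. Proof. by case: hp. Qed.

Lemma iid_pair_ge0 n (x : seqn A n * seqn B n) : 0 <= iid_pair p x.
Proof. by rewrite /iid_pair prodr_ge0 // => i _; apply: pmf_ge0. Qed.

Lemma iid_pair_sum1 n : \sum_(x : seqn A n * seqn B n) iid_pair p x = 1.
Proof.
rewrite /iid_pair (@sum_pair_seqn_prod _ _ n (fun=> p)).
by case: hp => _ ->; rewrite prodr_const expr1n.
Qed.

Lemma iid_pair_gt0_letter n (x : seqn A n * seqn B n) :
  0 < iid_pair p x -> forall i, 0 < p (x.1 i, x.2 i).
Proof.
move=> hx i; rewrite lt_def pmf_ge0 andbT.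
by have /prodf_neq0 := gt_eqF hx; apply.
Qed.

Definition letter_sum (g : A * B -> R) n (x : seqn A n * seqn B n) :=
  \sum_i g (x.1 i, x.2 i).

Definition mean (g : A * B -> R) := \sum_l p l * g l.

Lemma iid_pair_cross_moment (Y : A * B -> R) n (i j : 'I_n) :
  mean Y = 0 ->
  \sum_(x : seqn A n * seqn B n) iid_pair p x * (Y (x.1 i, x.2 i) * Y (x.1 j, x.2 j)) =
  if j == i then mean (fun l => Y l ^+ 2) else 0.
Proof.
move=> EY; pose f k := fun l => (if k == i then Y l else 1) * (if k == j then Y l else 1).
have pick (a : 'I_n -> R) (k0 : 'I_n) : \prod_k (if k == k0 then a k else 1) = a k0.
  by rewrite -big_mkcond big_pred1_eq.
transitivity (\sum_(x : seqn A n * seqn B n) \prod_k (p (x.1 k, x.2 k) * f k (x.1 k, x.2 k))).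
  apply: eq_bigr => x _; rewrite big_split /= big_split /=.
  by rewrite (pick (fun k => Y (x.1 k, x.2 k))) (pick (fun k => Y (x.1 k, x.2 k))).
rewrite (@sum_pair_seqn_prod _ _ n (fun k l => p l * f k l)) (bigD1 i) //= /f eqxx.
case: (eqVneq i j) => [<-|nij].
  rewrite [X in _ * X]big1 ?mulr1; first by apply: eq_bigr => l _; rewrite expr2.
  move=> k /negbTE ->; under eq_bigr do rewrite !mulr1.
  by case: hp.
under eq_bigr do rewrite mulr1.
by rewrite -/(mean Y) EY mul0r.
Qed.

Lemma iid_pair_variance (g : A * B -> R) n :
  \sum_(x : seqn A n * seqn B n) iid_pair p x * (letter_sum g x - n%:R * mean g) ^+ 2 =
  n%:R * mean (fun l => (g l - mean g) ^+ 2).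
Proof.
set Y := fun l => g l - mean g.
have EY : mean Y = 0.
  rewrite /mean /Y; under eq_bigr => l _ do rewrite mulrBr.
  by rewrite sumrB -mulr_suml; case: hp => _ ->; rewrite mul1r subrr.
have center (x : seqn A n * seqn B n) : letter_sum g x - n%:R * mean g = \sum_i Y (x.1 i, x.2 i).
  by rewrite /letter_sum /Y sumrB sumr_const card_ord mulr_natl.
under eq_bigr => x _.
  rewrite center expr2 mulr_suml mulr_sumr.
  under eq_bigr => i _ do rewrite mulr_sumr mulr_sumr.
over.
rewrite /= exchange_big /=; under eq_bigr => i _ do rewrite exchange_big /=.
under eq_bigr => i _ do under eq_bigr => j _ do rewrite iid_pair_cross_moment //.
under eq_bigr => i _ do rewrite -big_mkcond big_pred1_eq.
by rewrite sumr_const card_ord mulr_natl.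
Qed.


Lemma iid_pair_chebyshev (g : A * B -> R) n (E : pred (seqn A n * seqn B n)) (c : R) :
  0 < c -> (forall x, E x -> c <= (letter_sum g x - n%:R * mean g) ^+ 2) ->
  \sum_(x | E x) iid_pair p x <= n%:R * mean (fun l => (g l - mean g) ^+ 2) / c.
Proof.
move=> c0 hE; rewrite -iid_pair_variance // mulr_suml.
apply: (le_trans (y := \sum_(x | E x)
  iid_pair p x * (letter_sum g x - n%:R * mean g) ^+ 2 / c)).
  apply: ler_sum => x Ex; rewrite -mulrA -{1}(mulr1 (iid_pair p x)).
  by rewrite ler_wpM2l ?iid_pair_ge0 // ler_pdivlMr ?mul1r ?hE.
apply: ler_sum_subset => // x _.
by apply: divr_ge0; [rewrite mulr_ge0 ?sqr_ge0 ?iid_pair_ge0 | exact: ltW].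
Qed.

Variable u : A * B -> R.
Hypothesis hu : forall l, 0 < p l -> 0 < u l.

Definition letter_prod n (x : seqn A n * seqn B n) := \prod_i u (x.1 i, x.2 i).

Definition cross_entropy := mean (fun l => - log2 (u l)).

Definition atypical n eta (x : seqn A n * seqn B n) :=
  (0 < iid_pair p x) &&
  ((pow2 (- (n%:R * (cross_entropy - eta))) < letter_prod x) ||
   (letter_prod x < pow2 (- (n%:R * (cross_entropy + eta))))).

Lemma atypical_deviation n eta (x : seqn A n * seqn B n) : 0 < eta ->
  atypical eta x ->
  (n%:R * eta) ^+ 2 <= (letter_sum (fun l => - log2 (u l)) x - n%:R * cross_entropy) ^+ 2.
Proof.
move=> eta0 /andP [px hb].
have ux i : 0 < u (x.1 i, x.2 i) by apply/hu/iid_pair_gt0_letter.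
have [U0 LU] : 0 < letter_prod x /\
    log2 (letter_prod x) = - letter_sum (fun l => - log2 (u l)) x.
  rewrite /letter_sum sumrN opprK.
  apply: (big_ind2 (fun x y => 0 < x /\ log2 x = y)) => [|a1 a2 b1 b2 [h1 <-] [h2 <-]|i _].
  - by rewrite log2_1.
  - by rewrite mulr_gt0 // log2M.
  - by [].
have neta : 0 <= n%:R * eta by rewrite mulr_ge0 // ltW.
case/orP: hb => hb.
  by move: hb; rewrite -(ltr_log2 (pow2_gt0 _) U0) log2_pow2 LU; nra.
by move: hb; rewrite -(ltr_log2 U0 (pow2_gt0 _)) log2_pow2 LU; nra.
Qed.

Lemma atypical_mass_small eta theta : 0 < eta -> 0 < theta ->
  exists N, forall n, (N <= n)%N -> (0 < n)%N ->
  \sum_(x | atypical (n:=n) eta x) iid_pair p x <= theta.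
Proof.
move=> eta0 theta0.
set V := mean (fun l => (- log2 (u l) - cross_entropy) ^+ 2).
have V0 : 0 <= V by rewrite sumr_ge0 // => l _; rewrite mulr_ge0 ?sqr_ge0 ?pmf_ge0.
exists (Num.truncn (V / (eta ^+ 2 * theta))).+1 => n hn n0.
have nR : 0 < n%:R :> R by rewrite ltr0n.
have hnV : V / (eta ^+ 2 * theta) < n%:R.
  by apply: (lt_le_trans (truncnS_gt _)); rewrite ler_nat.
have nete : 0 < (n%:R * eta) ^+ 2 by rewrite exprn_gt0 // mulr_gt0.
apply: le_trans (iid_pair_chebyshev nete (@atypical_deviation n eta^~ eta0)) _.
rewrite -/V ler_pdivrMr // exprMn expr2.
rewrite ltr_pdivrMr ?mulr_gt0 ?exprn_gt0 // in hnV.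
have : 0 < eta ^+ 2 by rewrite exprn_gt0.
nra.
Qed.

End IidPair.

Section Divergence.
Variable R : realType.
Variables (T : finType) (P Q : T -> R).
Hypotheses (P0 : forall t, 0 <= P t) (Q0 : forall t, 0 <= Q t).
Hypothesis PQ : forall t, 0 < P t -> 0 < Q t.

Lemma log_sum_inequality (E : pred T) : 0 < \sum_(t | E t) P t ->
  (\sum_(t | E t) P t) * log2 ((\sum_(t | E t) P t) / (\sum_(t | E t) Q t))
   <= \sum_(t | E t) P t * log2 (P t / Q t).
Proof.
set a := \sum_(t | E t) P t; set b := \sum_(t | E t) Q t => a0.
have b0 : 0 < b := sum_gt0_dominated P0 Q0 PQ a0.
have l2 := @ln2_gt0 R.
rewrite -subr_ge0 /a mulr_suml -sumrB.
(* termwise, [P log (P/Q) - P log (a/b) >= (P - Q a/b) / ln 2], which sums to 0 *)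
apply: (le_trans (y := \sum_(t | E t) (P t - Q t * (a / b)) / ln 2)); last first.
  apply: ler_sum => t Et.
  have [->|pt0] := eqVneq (P t) 0.
    rewrite !mul0r subrr sub0r mulNr oppr_le0.
    apply: divr_ge0; last exact: ltW.
    by apply: mulr_ge0; [exact: Q0 | rewrite divr_ge0 // ltW].
  have pt : 0 < P t by rewrite lt_def pt0 P0.
  have qt := PQ pt.
  rewrite -mulrBr -log2_div ?divr_gt0 //.
  have z0 : 0 < (P t / Q t) / (a / b) by rewrite !divr_gt0.
  apply: le_trans (ler_wpM2l (ltW pt) (log2_ge1V z0)).
  by rewrite le_eqVlt; apply/orP; left; apply/eqP; field;
    rewrite (gt_eqF l2) (gt_eqF b0) (gt_eqF a0) (gt_eqF qt) (gt_eqF pt).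
rewrite -mulr_suml sumrB -mulr_suml -/a -/b mulrCA mulfV ?(gt_eqF b0) //.
by rewrite mulr1 subrr mul0r.
Qed.

Hypothesis Q1 : \sum_t Q t <= 1.

Lemma partial_divergence_ge (E : pred T) :
  - (ln 2)^-1 <= \sum_(t | E t) P t * log2 (P t / Q t).
Proof.
have l2 := @ln2_gt0 R.
have [az|apos] := eqVneq (\sum_(t | E t) P t) 0.
  have Pz := psumr_eq0P (fun t _ => P0 t) az.
  by rewrite big1 ?oppr_le0 ?invr_ge0 ?(ltW l2) // => t Et; rewrite Pz // mul0r.
have a0 : 0 < \sum_(t | E t) P t by rewrite lt_def apos sumr_ge0.
have b0 := sum_gt0_dominated P0 Q0 PQ a0.
apply: le_trans (log_sum_inequality a0).
rewrite log2_div // mulrBr.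
have hb : log2 (\sum_(t | E t) Q t) <= 0.
  apply: log2_le0 b0 (le_trans _ Q1).
  by apply: ler_sum_subset => // t _; apply: Q0.
have := xlog2x_ge a0.
have : 0 <= - ((\sum_(t | E t) P t) * log2 (\sum_(t | E t) Q t)).
  by rewrite oppr_ge0 mulr_ge0_le0 // ltW.
lra.
Qed.

Lemma divergence_ge_event (E : pred T) : 0 < \sum_(t | E t) P t ->
  - (2 / ln 2) - (\sum_(t | E t) P t) * log2 (\sum_(t | E t) Q t)
   <= \sum_t P t * log2 (P t / Q t).
Proof.
move=> a0; have b0 := sum_gt0_dominated P0 Q0 PQ a0.
rewrite [X in _ <= X](bigID E) /=.
have h1 := partial_divergence_ge (fun t => ~~ E t).
have h2 := log_sum_inequality a0.
rewrite log2_div // mulrBr in h2.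
have h3 := xlog2x_ge a0.
lra.
Qed.

End Divergence.

Section Entropies.
Variable R : realType.
Variables (A B : finType) (p : A * B -> R).
Hypothesis hp : is_pmf p.

Lemma marg1_ge l : p l <= marg1 p l.1.
Proof.
case: l => a b; rewrite /marg1 (bigD1 b) //= lerDl sumr_ge0 // => *; exact: pmf_ge0.
Qed.

Lemma marg2_ge l : p l <= marg2 p l.2.
Proof.
case: l => a b; rewrite /marg2 (bigD1 a) //= lerDl sumr_ge0 // => *; exact: pmf_ge0.
Qed.

Lemma marg1_ge0 a : 0 <= marg1 p a.
Proof. by rewrite sumr_ge0 // => *; exact: pmf_ge0. Qed.

Lemma marg2_ge0 b : 0 <= marg2 p b.
Proof. by rewrite sumr_ge0 // => *; exact: pmf_ge0. Qed.

Lemma marg1_gt0 l : 0 < p l -> 0 < marg1 p l.1.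
Proof. by move=> h; rewrite (lt_le_trans h) // marg1_ge. Qed.

Lemma marg2_gt0 l : 0 < p l -> 0 < marg2 p l.2.
Proof. by move=> h; rewrite (lt_le_trans h) // marg2_ge. Qed.

Lemma cond1_gt0 l : 0 < p l -> 0 < p l / marg2 p l.2.
Proof. by move=> h; rewrite divr_gt0 // marg2_gt0. Qed.

Lemma cond2_gt0 l : 0 < p l -> 0 < p l / marg1 p l.1.
Proof. by move=> h; rewrite divr_gt0 // marg1_gt0. Qed.

Lemma sum_marg1 : \sum_a marg1 p a = 1.
Proof.
rewrite /marg1 (pair_bigA _ (fun a b => p (a, b))) /=.
by case: hp => _ <-; apply: eq_bigr => -[].
Qed.

Lemma sum_marg2 : \sum_b marg2 p b = 1.
Proof.
rewrite /marg2 exchange_big (pair_bigA _ (fun a b => p (a, b))) /=.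
by case: hp => _ <-; apply: eq_bigr => -[].
Qed.

Lemma sum_seqn_prod_marg1 n : \sum_(s : seqn A n) \prod_i marg1 p (s i) = 1.
Proof. by rewrite -(bigA_distr_bigA (fun=> marg1 p)) /= sum_marg1 prodr_const expr1n. Qed.

Lemma sum_seqn_prod_marg2 n : \sum_(s : seqn B n) \prod_i marg2 p (s i) = 1.
Proof. by rewrite -(bigA_distr_bigA (fun=> marg2 p)) /= sum_marg2 prodr_const expr1n. Qed.

Lemma cross_entropy_self : cross_entropy p p = H12 p.
Proof.
by rewrite /cross_entropy /mean /H12 /entropy -sumrN; apply: eq_bigr => l _; rewrite mulrN.
Qed.

Lemma cross_entropy_marg1 : cross_entropy p (fun l => marg1 p l.1) = H1 p.
Proof.
rewrite /cross_entropy /mean /H1 /entropy -sumrN.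
rewrite (eq_bigr (fun l => p (l.1, l.2) * - log2 (marg1 p l.1))); last by case.
rewrite -(pair_bigA _ (fun a b => p (a, b) * - log2 (marg1 p a))) /=.
by apply: eq_bigr => a _; rewrite -mulr_suml mulrN.
Qed.

Lemma cross_entropy_marg2 : cross_entropy p (fun l => marg2 p l.2) = H2 p.
Proof.
rewrite /cross_entropy /mean /H2 /entropy -sumrN.
rewrite (eq_bigr (fun l => p (l.1, l.2) * - log2 (marg2 p l.2))); last by case.
rewrite -(pair_bigA _ (fun a b => p (a, b) * - log2 (marg2 p b))) /= exchange_big /=.
by apply: eq_bigr => b _; rewrite -mulr_suml mulrN.
Qed.

Lemma cross_entropy_cond1 : cross_entropy p (fun l => p l / marg2 p l.2) = H1given2 p.
Proof.
rewrite /H1given2 -cross_entropy_self -cross_entropy_marg2 /cross_entropy /mean -sumrB.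
apply: eq_bigr => l _; have [->|pl] := eqVneq (p l) 0; first by rewrite !mul0r subrr.
have pl0 : 0 < p l by rewrite lt_def pl pmf_ge0.
by rewrite log2_div ?marg2_gt0 //; ring.
Qed.

Lemma cross_entropy_cond2 : cross_entropy p (fun l => p l / marg1 p l.1) = H2given1 p.
Proof.
rewrite /H2given1 -cross_entropy_self -cross_entropy_marg1 /cross_entropy /mean -sumrB.
apply: eq_bigr => l _; have [->|pl] := eqVneq (p l) 0; first by rewrite !mul0r subrr.
have pl0 : 0 < p l by rewrite lt_def pl pmf_ge0.
by rewrite log2_div ?marg1_gt0 //; ring.
Qed.

Lemma iid_pair_factor_marg2 n (x : seqn A n * seqn B n) :
  iid_pair p x = letter_prod (fun l => p l / marg2 p l.2) x * \prod_i marg2 p (x.2 i).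
Proof.
rewrite /iid_pair /letter_prod -big_split /=; apply: eq_bigr => i _.
have [m0|m0] := eqVneq (marg2 p (x.2 i)) 0; last by rewrite divfK.
have := marg2_ge (x.1 i, x.2 i); rewrite /= m0 => pl.
have -> : p (x.1 i, x.2 i) = 0 by apply/eqP; rewrite eq_le pl pmf_ge0.
by rewrite !mul0r.
Qed.

Lemma iid_pair_factor_marg1 n (x : seqn A n * seqn B n) :
  iid_pair p x = letter_prod (fun l => p l / marg1 p l.1) x * \prod_i marg1 p (x.1 i).
Proof.
rewrite /iid_pair /letter_prod -big_split /=; apply: eq_bigr => i _.
have [m0|m0] := eqVneq (marg1 p (x.1 i)) 0; last by rewrite divfK.
have := marg1_ge (x.1 i, x.2 i); rewrite /= m0 => pl.
have -> : p (x.1 i, x.2 i) = 0 by apply/eqP; rewrite eq_le pl pmf_ge0.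
by rewrite !mul0r.
Qed.

(* Gibbs' inequality against the product of the marginals. *)
Lemma entropy_subadditive : H12 p <= H1 p + H2 p.
Proof.
pose Q l := marg1 p l.1 * marg2 p l.2.
have Q0 l : 0 <= Q l by rewrite mulr_ge0 ?marg1_ge0 ?marg2_ge0.
have PQ l : 0 < p l -> 0 < Q l by move=> h; rewrite mulr_gt0 ?marg1_gt0 ?marg2_gt0.
have p1 : \sum_(l | xpredT l) p l = 1 by case: hp.
have Q1 : \sum_(l | xpredT l) Q l = 1.
  rewrite /Q -(pair_bigA _ (fun a b => marg1 p a * marg2 p b)) /=.
  under eq_bigr => a _ do rewrite -mulr_sumr.
  by rewrite -mulr_suml sum_marg1 sum_marg2 mul1r.
have := log_sum_inequality (pmf_ge0 hp) Q0 PQ (E := xpredT); rewrite p1 Q1.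
rewrite ltr01 divr1 log2_1 mulr0 => /(_ isT) L.
rewrite -cross_entropy_self -cross_entropy_marg1 -cross_entropy_marg2 /cross_entropy /mean.
rewrite -subr_ge0 (_ : _ + _ - _ = \sum_l p l * log2 (p l / Q l)) //.
rewrite -big_split -sumrB /=; apply: eq_bigr => l _.
have [->|pl] := eqVneq (p l) 0; first by rewrite !mul0r !addr0 subrr.
have pl0 : 0 < p l by rewrite lt_def pl pmf_ge0.
by rewrite log2_div ?PQ // log2M ?marg1_gt0 ?marg2_gt0 //; ring.
Qed.

End Entropies.

Section Leakage.
Variable R : realType.
Variables F1 F2 : finType.
Variables pX pK : F1 * F2 -> R.
Hypotheses (hX : is_pmf pX) (hK : is_pmf pK).
Variables (n : nat) (S : system F1 F2 n).

Lemma correct_inj k1 k2 (x x' : seqn F1 n * seqn F2 n) :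
  correct S x -> correct S x' -> Phi1 S k1 x.1 = Phi1 S k1 x'.1 ->
  Phi2 S k2 x.2 = Phi2 S k2 x'.2 -> x = x'.
Proof.
move=> /eqP hx /eqP hx' e1 e2.
by rewrite -hx -hx' -(@sys_ok _ _ _ S k1 k2) -(@sys_ok _ _ _ S k1 k2) e1 e2.
Qed.

Definition encrypt (k x : seqn F1 n * seqn F2 n) : C1 S * C2 S :=
  (Phi1 S k.1 x.1, Phi2 S k.2 x.2).

Local Notation PCX := (joint_CX pX pK (S:=S)).

Lemma joint_CX_ge0 t : 0 <= PCX t.
Proof. by apply: sumr_ge0 => k _; rewrite mulr_ge0 ?iid_pair_ge0. Qed.

Lemma marg2_joint_CX x : marg2 PCX x = iid_pair pX x.
Proof.
rewrite /marg2 /joint_CX /= -[RHS]mul1r -(iid_pair_sum1 hK n) mulr_suml.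
by rewrite [RHS](partition_big (encrypt^~ x) xpredT).
Qed.

Lemma sum_marg1_joint_CX : \sum_c marg1 PCX c = 1.
Proof.
rewrite /marg1 exchange_big /=.
under eq_bigr => x _ do rewrite -/(marg2 _ x) marg2_joint_CX.
exact: iid_pair_sum1.
Qed.

Definition indep_CX (t : (C1 S * C2 S) * (seqn F1 n * seqn F2 n)) :=
  marg1 PCX t.1 * marg2 PCX t.2.

Lemma indep_CX_ge0 t : 0 <= indep_CX t.
Proof.
by rewrite /indep_CX mulr_ge0 // /marg1 /marg2 sumr_ge0 // => i _; apply: joint_CX_ge0.
Qed.

Lemma indep_CX_gt0 t : 0 < PCX t -> 0 < indep_CX t.
Proof.
case: t => c x h; rewrite /indep_CX mulr_gt0 // (lt_le_trans h) //.
  by rewrite /marg1 (bigD1 x) //= lerDl sumr_ge0 // => i _; exact: joint_CX_ge0.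
by rewrite /marg2 (bigD1 c) //= lerDl sumr_ge0 // => i _; exact: joint_CX_ge0.
Qed.

Lemma sum_indep_CX : \sum_t indep_CX t = 1.
Proof.
rewrite /indep_CX -(pair_bigA _ (fun c x => marg1 PCX c * marg2 PCX x)) /=.
under eq_bigr => c _ do rewrite -mulr_sumr.
rewrite -mulr_suml sum_marg1_joint_CX mul1r.
under eq_bigr => x _ do rewrite marg2_joint_CX.
exact: iid_pair_sum1.
Qed.

(* Keys and sources are independent, so the event [CX] has joint probability
   at least [P(G) P(KT)]. *)
Variables (G KT : pred (seqn F1 n * seqn F2 n))
  (compat : seqn F1 n * seqn F2 n -> seqn F1 n * seqn F2 n -> C1 S * C2 S -> bool).
Hypothesis compat_encrypt : forall k x, compat k x (encrypt k x).

Definition CX (t : (C1 S * C2 S) * (seqn F1 n * seqn F2 n)) :=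
  G t.2 && [exists k, KT k && compat k t.2 t.1].

Lemma joint_CX_CX_ge :
  (\sum_(x | G x) iid_pair pX x) * (\sum_(k | KT k) iid_pair pK k) <=
  \sum_(t | CX t) PCX t.
Proof.
pose w k x := if G x && KT k then iid_pair pK k * iid_pair pX x else 0.
apply: (le_trans (y := \sum_(t : (C1 S * C2 S) * (seqn F1 n * seqn F2 n))
                         \sum_(k | encrypt k t.2 == t.1) w k t.2)).
  rewrite -(pair_bigA _ (fun c x => \sum_(k | encrypt k x == c) w k x)) /= exchange_big /=.
  have fold_keys x : \sum_c \sum_(k | encrypt k x == c) w k x = \sum_k w k x.
    by rewrite [RHS](partition_big (encrypt^~ x) xpredT).
  under [X in _ <= X]eq_bigr => x _ do rewrite fold_keys.
  rewrite mulr_suml [X in X <= _]big_mkcond; apply: ler_sum => x _ /=.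
  rewrite /w; case: (G x) => /=; last by rewrite big1.
  rewrite mulr_sumr [X in X <= _]big_mkcond; apply: ler_sum => k _.
  by case: (KT k); rewrite //= mulrC.
rewrite [X in _ <= X]big_mkcond; apply: ler_sum => t _; case: ifP => CXt.
  apply: ler_sum => k _; rewrite /w; case: ifP => // _.
  by rewrite mulr_ge0 ?iid_pair_ge0.
rewrite big1 // => k /eqP ek; rewrite /w; case: ifP => // /andP [gx kk].
move: CXt; rewrite /CX gx /=; move/negbT/existsPn => /(_ k).
by rewrite kk /= -ek compat_encrypt.
Qed.

Lemma indep_CX_CX_le (beta : R) :
  (forall c, \sum_(x | G x && [exists k, KT k && compat k x c]) iid_pair pX x <= beta) ->
  \sum_(t | CX t) indep_CX t <= beta.
Proof.
move=> hc; rewrite /indep_CX (eq_bigl (fun t => xpredT t.1 && CX (t.1, t.2))); last by case.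
rewrite -(pair_big_dep xpredT (fun c x => CX (c, x)) (fun c x => marg1 PCX c * marg2 PCX x)) /=.
apply: (le_trans (y := \sum_c marg1 PCX c * beta)).
  apply: ler_sum => c _; rewrite -mulr_sumr ler_wpM2l ?sumr_ge0 // => [x _|].
    exact: joint_CX_ge0.
  by under eq_bigr => x _ do rewrite marg2_joint_CX; exact: hc.
by rewrite -mulr_suml sum_marg1_joint_CX mul1r.
Qed.

Lemma leakage_ge (beta : R) :
  (forall c, \sum_(x | G x && [exists k, KT k && compat k x c]) iid_pair pX x <= beta) ->
  0 < beta -> beta <= 1 ->
  0 < (\sum_(x | G x) iid_pair pX x) * (\sum_(k | KT k) iid_pair pK k) ->
  - (2 / ln 2) - (\sum_(x | G x) iid_pair pX x) * (\sum_(k | KT k) iid_pair pK k)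
     * log2 beta <= leakage pX pK S.
Proof.
move=> hc b0 b1; set al := _ * _ => al0.
have ha := joint_CX_CX_ge; rewrite -/al in ha.
have apos : 0 < \sum_(t | CX t) PCX t by apply: lt_le_trans ha.
have hb := indep_CX_CX_le hc.
have bp := sum_gt0_dominated joint_CX_ge0 indep_CX_ge0 indep_CX_gt0 apos.
have lb : log2 (\sum_(t | CX t) indep_CX t) <= log2 beta by rewrite ler_log2.
have lb0 := log2_le0 b0 b1.
have e1 : 0 <= (\sum_(t | CX t) PCX t - al) * (- log2 beta).
  by rewrite mulr_ge0 // ?subr_ge0 // oppr_ge0.
have e2 : 0 <= (\sum_(t | CX t) PCX t) *
                (log2 beta - log2 (\sum_(t | CX t) indep_CX t)).
  by rewrite mulr_ge0 // ?subr_ge0 // ltW.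
have Q1 : \sum_t indep_CX t <= 1 by rewrite sum_indep_CX.
apply: le_trans (divergence_ge_event joint_CX_ge0 indep_CX_ge0 indep_CX_gt0 Q1 apos).
nra.
Qed.

End Leakage.

Section Splittings.
Variable R : realType.
Variables (A B : finType) (p : A * B -> R).
Hypothesis hp : is_pmf p.

(* [p^n] factors as an i.i.d. weight [u] times a sub-probability of a side
   statistic: conditionally on the side statistic, [u] carries the law. *)
Record iid_split (u : A * B -> R) (n : nat) := IidSplit {
  split_side : finType;
  split_proj : seqn A n * seqn B n -> split_side;
  split_mass : split_side -> R;
  split_mass_ge0 : forall y, 0 <= split_mass y;
  split_mass_le1 : \sum_y split_mass y <= 1;
  split_factor : forall x, iid_pair p x = letter_prod u x * split_mass (split_proj x) }.

(* For keys: [u^n] is the law of a statistic of the key, such as one of its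
   components. *)
Record iid_marg (u : A * B -> R) (n : nat) := IidMarg {
  marg_side : finType;
  marg_proj : seqn A n * seqn B n -> marg_side;
  marg_mass : marg_side -> R;
  marg_mass_ge0 : forall y, 0 <= marg_mass y;
  marg_mass_le1 : \sum_y marg_mass y <= 1;
  marg_factor : forall x, letter_prod u x = marg_mass (marg_proj x) }.

Definition split_given2 n : iid_split (fun l => p l / marg2 p l.2) n.
Proof.
apply: (@IidSplit _ n _ snd (fun s => \prod_i marg2 p (s i))).
- by move=> s; apply: prodr_ge0 => i _; apply: marg2_ge0.
- by rewrite sum_seqn_prod_marg2.
- exact: iid_pair_factor_marg2.
Defined.

Definition split_given1 n : iid_split (fun l => p l / marg1 p l.1) n.
Proof.
apply: (@IidSplit _ n _ fst (fun s => \prod_i marg1 p (s i))).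
- by move=> s; apply: prodr_ge0 => i _; apply: marg1_ge0.
- by rewrite sum_seqn_prod_marg1.
- exact: iid_pair_factor_marg1.
Defined.

Definition split_none n : iid_split p n.
Proof.
apply: (@IidSplit _ n unit (fun=> tt) (fun=> 1)).
- by move=> _; exact: ler01.
- by rewrite sumr_const card_unit.
- by move=> x; rewrite mulr1.
Defined.

Definition marg_fst n : iid_marg (fun l => marg1 p l.1) n.
Proof.
apply: (@IidMarg _ n _ fst (fun s => \prod_i marg1 p (s i))) => //.
- by move=> s; apply: prodr_ge0 => i _; apply: marg1_ge0.
- by rewrite sum_seqn_prod_marg1.
Defined.

Definition marg_snd n : iid_marg (fun l => marg2 p l.2) n.
Proof.
apply: (@IidMarg _ n _ snd (fun s => \prod_i marg2 p (s i))) => //.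
- by move=> s; apply: prodr_ge0 => i _; apply: marg2_ge0.
- by rewrite sum_seqn_prod_marg2.
Defined.

Definition marg_id n : iid_marg p n.
Proof.
apply: (@IidMarg _ n (seqn A n * seqn B n)%type id (@iid_pair _ _ _ p n)) => //.
- exact: iid_pair_ge0.
- by rewrite iid_pair_sum1.
Defined.

End Splittings.
Arguments split_mass {R A B p u n} _ _.
Arguments split_mass_ge0 {R A B p u n} _ _.
Arguments marg_mass {R A B u n} _ _.
Arguments marg_mass_ge0 {R A B u n} _ _.

Section BlockBounds.
Variable R : realType.
Variables F1 F2 : finType.
Variables pX pK : F1 * F2 -> R.
Hypotheses (hX : is_pmf pX) (hK : is_pmf pK).
Variables (n : nat) (S : system F1 F2 n).
Local Notation src := (seqn F1 n * seqn F2 n)%type.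

Lemma correct_typical_mass (T : pred src) (eps theta : R) :
  err_prob pX S <= eps -> \sum_(x | ~~ T x) iid_pair pX x <= theta ->
  1 - eps - theta <= \sum_(x | correct S x && T x) iid_pair pX x.
Proof.
rewrite /err_prob => he ht.
have := iid_pair_sum1 hX n; rewrite (bigID (correct S)) /= (bigID T) /=.
have : \sum_(x | correct S x && ~~ T x) iid_pair pX x <= \sum_(x | ~~ T x) iid_pair pX x.
  by apply: ler_sum_subset => [x /andP [] //|x _]; exact: iid_pair_ge0.
lra.
Qed.

Variables (uX : F1 * F2 -> R) (sp : iid_split pX uX n).

(* Revealing the side statistic and the image under [f] pins down a correctly
   decoded sequence, so each typical fibre has at most [#|Z|] such points. *)
Lemma rate_counting (Z : finType) (f : src -> Z) (tau eps theta : R) :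
  0 <= tau ->
  (forall x x', correct S x -> correct S x' -> split_proj sp x = split_proj sp x' ->
     f x = f x' -> x = x') ->
  err_prob pX S <= eps ->
  \sum_(x : src | ~~ (letter_prod uX x <= tau)) iid_pair pX x <= theta ->
  1 - eps - theta <= #|Z|%:R * tau.
Proof.
move=> t0 hinj he ht; apply: le_trans (correct_typical_mass he ht) _.
pose E := [set x | correct S x && (letter_prod uX x <= tau)].
rewrite (eq_bigl (fun x => x \in E)); last by move=> x; rewrite inE.
apply: (sum_le_fibers (P := @iid_pair _ _ _ pX n) (pi := split_proj sp) (split_mass_ge0 sp) (split_mass_le1 sp) t0).
  by move=> x; rewrite inE => /andP [_ hu]; rewrite (split_factor sp) ler_wpM2r ?(split_mass_ge0 sp).
apply: card_fiber_le_codom => x y; rewrite !inE => /andP [cx _] /andP [cy _].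
exact: hinj.
Qed.

Variables (uK : F1 * F2 -> R) (mk : iid_marg uK n)
  (compat : marg_side mk -> src -> C1 S * C2 S -> bool).
Hypothesis compat_encrypt : forall k x, compat (marg_proj mk k) x (encrypt S k x).
Hypothesis compat_inj : forall kp c x x', correct S x -> correct S x' ->
  split_proj sp x = split_proj sp x' -> compat kp x c -> compat kp x' c -> x = x'.

(* A ciphertext is compatible with at most [1 / t] heavy key statistics, and
   each of them leaves one correctly decoded sequence per side statistic. *)
Lemma ciphertext_mass_le (tau t : R) : 0 < tau -> 0 < t -> forall c,
  \sum_(x | (correct S x && (letter_prod uX x <= tau)) &&
            [exists k, (t <= letter_prod uK k) && compat (marg_proj mk k) x c])
     iid_pair pX x <= tau / t.
Proof.
move=> tau0 t0 c; pose Ks := [set kp | t <= marg_mass mk kp].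
pose E := [set x | (correct S x && (letter_prod uX x <= tau)) &&
                   [exists k, (t <= letter_prod uK k) && compat (marg_proj mk k) x c]].
rewrite (eq_bigl (fun x => x \in E)); last by move=> x; rewrite inE.
apply: (le_trans (y := #|Ks|%:R * tau)).
  apply: (sum_le_fibers (P := @iid_pair _ _ _ pX n) (pi := split_proj sp)
            (split_mass_ge0 sp) (split_mass_le1 sp) (ltW tau0)).
    move=> x; rewrite inE => /andP [/andP [_ hu] _].
    by rewrite (split_factor sp) ler_wpM2r ?(split_mass_ge0 sp).
  apply: (card_fiber_le_tags (r := fun kp x => compat kp x c)).
    move=> x; rewrite inE => /andP [_ /existsP [k /andP [kk ck]]].
    by exists (marg_proj mk k); rewrite // inE -(marg_factor mk).
  move=> kp x x'; rewrite !inE => /andP [/andP [cx _] _] /andP [/andP [cx' _] _].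
  exact: compat_inj.
rewrite ler_pdivlMr // mulrAC.
have := ler_wpM2r (ltW tau0) (card_heavy_le (marg_mass_ge0 mk) (marg_mass_le1 mk) t0).
by rewrite mul1r.
Qed.

Lemma leakage_typical_ge (tau t eps theta : R) :
  err_prob pX S <= eps ->
  \sum_(x : src | ~~ (letter_prod uX x <= tau)) iid_pair pX x <= theta ->
  \sum_(k : src | ~~ (t <= letter_prod uK k)) iid_pair pK k <= theta ->
  0 < 1 - eps - theta -> 0 < tau -> 0 < t -> tau / t <= 1 ->
  - (2 / ln 2) - (1 - eps - theta) * (1 - theta) * log2 (tau / t) <= leakage pX pK S.
Proof.
move=> he htX htK a0 tau0 t0 beta1.
have al1 := correct_typical_mass he htX.
have al2 : 1 - theta <= \sum_(k : src | t <= letter_prod uK k) iid_pair pK k.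
  by have := iid_pair_sum1 hK n; rewrite (bigID (fun k => t <= letter_prod uK k)) /=; lra.
have eps0 : 0 <= eps.
  by apply: le_trans he; apply: sumr_ge0 => x _; exact: iid_pair_ge0.
set a := \sum_(x | _) _ in al1; set b := \sum_(k | _) _ in al2.
have a_pos : 0 < a by apply: lt_le_trans al1.
have b_pos : 0 < b by apply: lt_le_trans al2; lra.
have := @leakage_ge _ _ _ pX pK hX hK n S
  (fun x => correct S x && (letter_prod uX x <= tau)) (fun k => t <= letter_prod uK k)
  (fun k x c => compat (marg_proj mk k) x c) compat_encrypt _
  (ciphertext_mass_le tau0 t0) (divr_gt0 tau0 t0) beta1 (mulr_gt0 a_pos b_pos).
apply: le_trans; rewrite -/a -/b lerD2l lerN2.
have := log2_le0 (divr_gt0 tau0 t0) beta1; set L2 := log2 _ => L2_le0.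
by apply: ler_wnM2r => //; apply: ler_pM => //; lra.
Qed.

End BlockBounds.

Section Asymptotics.
Variable R : realType.

Lemma iid_mass_letter_prod_gt (A B : finType) (p u : A * B -> R) eta theta :
  is_pmf p -> (forall l, 0 < p l -> 0 < u l) -> 0 < eta -> 0 < theta ->
  exists N, forall n, (N <= n)%N -> (0 < n)%N ->
  \sum_(x : seqn A n * seqn B n |
          ~~ (letter_prod u x <= pow2 (- (n%:R * (cross_entropy p u - eta)))))
     iid_pair p x <= theta.
Proof.
move=> hp hu he ht; have [N HN] := atypical_mass_small hp hu he ht.
exists N => n hn n0; apply: le_trans (HN n hn n0).
apply: ler_sum_support => [x|x]; first exact: iid_pair_ge0.
by rewrite -ltNge /atypical => h1 ->; rewrite h1.
Qed.

Lemma iid_mass_letter_prod_lt (A B : finType) (p u : A * B -> R) eta theta :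
  is_pmf p -> (forall l, 0 < p l -> 0 < u l) -> 0 < eta -> 0 < theta ->
  exists N, forall n, (N <= n)%N -> (0 < n)%N ->
  \sum_(x : seqn A n * seqn B n |
          ~~ (pow2 (- (n%:R * (cross_entropy p u + eta))) <= letter_prod u x))
     iid_pair p x <= theta.
Proof.
move=> hp hu he ht; have [N HN] := atypical_mass_small hp hu he ht.
exists N => n hn n0; apply: le_trans (HN n hn n0).
apply: ler_sum_support => [x|x]; first exact: iid_pair_ge0.
by rewrite -ltNge /atypical => h1 ->; rewrite h1 orbT.
Qed.

Lemma exists_large_nat (X : R) (N : nat) : exists n, [/\ (N <= n)%N, (0 < n)%N & X < n%:R].
Proof.
exists (maxn N (Num.truncn X).+1); split; first exact: leq_maxl.
  by rewrite leq_max orbT.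
by apply: (lt_le_trans (truncnS_gt X)); rewrite ler_nat leq_maxr.
Qed.

Lemma le_of_log_bound_eventually (h r c0 : R) : 0 < c0 ->
  (forall eta, 0 < eta -> exists N, forall n, (N <= n)%N -> (0 < n)%N ->
      log2 c0 <= n%:R * (r + 3%:R * eta - h)) -> h <= r.
Proof.
move=> c0p H; rewrite leNgt; apply/negP => hr.
have dp : 0 < h - r by rewrite subr_gt0.
have [N HN] := H _ (divr_gt0 dp (ltr0n _ 6)).
have [n [hn n0 hX]] := exists_large_nat (- log2 c0 * 2%:R / (h - r)) N.
have := HN n hn n0.
rewrite ltr_pdivrMr // in hX.
have -> : r + 3%:R * ((h - r) / 6%:R) - h = - ((h - r) / 2%:R) by field.
lra.
Qed.

Lemma le_of_linear_bound_eventually (hX hK c1 c2 d : R) : 0 < c1 ->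
  (forall eta, 0 < eta -> 2%:R * eta < hX - hK -> exists N, forall n,
      (N <= n)%N -> (0 < n)%N -> c1 * (n%:R * (hX - hK - 2%:R * eta)) - c2 <= d) ->
  hX <= hK.
Proof.
move=> c1p H; rewrite leNgt; apply/negP => hr.
have dp : 0 < hX - hK by rewrite subr_gt0.
have [|N HN] := H _ (divr_gt0 dp (ltr0n _ 4)); first lra.
have [n [hn n0 hX0]] := exists_large_nat ((d + c2) * 2%:R / (c1 * (hX - hK))) N.
have := HN n hn n0.
have -> : hX - hK - 2%:R * ((hX - hK) / 4%:R) = (hX - hK) / 2%:R by field.
rewrite ltr_pdivrMr ?mulr_gt0 // in hX0.
lra.
Qed.

End Asymptotics.

Section Converses.
Variable R : realType.
Variables F1 F2 : finType.
Variables pX pK : F1 * F2 -> R.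
Hypotheses (hX : is_pmf pX) (hK : is_pmf pK).
Variable sys : forall n, system F1 F2 n.
Local Notation src n := (seqn F1 n * seqn F2 n)%type.

Lemma rate_converse (u : F1 * F2 -> R) (sp : forall n, iid_split pX u n)
    (Z : nat -> finType) (f : forall n, src n -> Z n) (r eps : R) :
  0 < eps < 1 -> (forall l, 0 < pX l -> 0 < u l) ->
  (forall n x x', correct (sys n) x -> correct (sys n) x' ->
     split_proj (sp n) x = split_proj (sp n) x' -> f n x = f n x' -> x = x') ->
  (forall eta, 0 < eta -> exists n0, forall n, (n0 <= n)%N -> (0 < n)%N ->
     err_prob pX (sys n) <= eps /\ log2 (#|Z n|%:R) <= n%:R * (r + 2%:R * eta)) ->
  cross_entropy pX u <= r.
Proof.
move=> /andP [e0 e1] hu hinj H.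
have c0 : 0 < (1 - eps) / 2%:R by rewrite divr_gt0 // subr_gt0.
apply: (le_of_log_bound_eventually c0) => eta he.
have [N1 HN1] := iid_mass_letter_prod_gt hX hu he c0.
have [n0 Hn0] := H eta he.
exists (maxn N1 n0) => n hn n_gt0.
have [err rate] := Hn0 n (leq_trans (leq_maxr _ _) hn) n_gt0.
have := rate_counting hX (f := f n) (ltW (pow2_gt0 _)) (@hinj n) err
  (HN1 n (leq_trans (leq_maxl _ _) hn) n_gt0).
rewrite (_ : 1 - eps - _ = (1 - eps) / 2%:R); last by field.
set tau := pow2 _ => hc.
have Z0 : 0 < #|Z n|%:R :> R by move: (lt_le_trans c0 hc); rewrite pmulr_lgt0 ?pow2_gt0.
move: hc; rewrite -(ler_log2 c0) ?mulr_gt0 ?pow2_gt0 // log2M ?pow2_gt0 // log2_pow2.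
lra.
Qed.

Lemma key_converse (uX uK : F1 * F2 -> R) (sp : forall n, iid_split pX uX n)
    (mk : forall n, iid_marg uK n)
    (compat : forall n, marg_side (mk n) -> src n -> C1 (sys n) * C2 (sys n) -> bool)
    (eps d : R) :
  0 < eps < 1 -> (forall l, 0 < pX l -> 0 < uX l) -> (forall l, 0 < pK l -> 0 < uK l) ->
  (forall n k x, compat n (marg_proj (mk n) k) x (encrypt (sys n) k x)) ->
  (forall n kp c x x', correct (sys n) x -> correct (sys n) x' ->
     split_proj (sp n) x = split_proj (sp n) x' -> compat n kp x c -> compat n kp x' c ->
     x = x') ->
  (exists n0, forall n, (n0 <= n)%N -> (0 < n)%N ->
     err_prob pX (sys n) <= eps /\ leakage pX pK (sys n) <= d) ->
  cross_entropy pX uX <= cross_entropy pK uK.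
Proof.
move=> /andP [e0 e1] huX huK henc hinj [n0 Hn0].
set th := (1 - eps) / 4%:R.
have th0 : 0 < th by rewrite divr_gt0 // subr_gt0.
have a0 : 0 < 1 - eps - th by rewrite /th; lra.
apply: (le_of_linear_bound_eventually (c1 := (1 - eps - th) * (1 - th))
          (c2 := 2 / ln 2) (d := d)); first by rewrite mulr_gt0 // /th; lra.
move=> eta he hlt.
have [N1 HN1] := iid_mass_letter_prod_gt hX huX he th0.
have [N2 HN2] := iid_mass_letter_prod_lt hK huK he th0.
exists (maxn (maxn N1 N2) n0) => n hn n_gt0.
have [err leak] := Hn0 n (leq_trans (leq_maxr _ _) hn) n_gt0.
have hn' := leq_trans (leq_maxl _ _) hn.
set tau := pow2 (- (n%:R * (cross_entropy pX uX - eta))).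
set t := pow2 (- (n%:R * (cross_entropy pK uK + eta))).
have log_ratio : log2 (tau / t) =
    - (n%:R * (cross_entropy pX uX - cross_entropy pK uK - 2%:R * eta)).
  by rewrite log2_div ?pow2_gt0 // /tau /t !log2_pow2; ring.
have ratio_le1 : tau / t <= 1.
  rewrite -(pow2_log2 (divr_gt0 (pow2_gt0 _) (pow2_gt0 _))) -/tau -/t log_ratio.
  rewrite /pow2 expR_le1 mulNr oppr_le0 mulr_ge0 ?(ltW (@ln2_gt0 R)) //.
  by rewrite mulr_ge0 // subr_ge0 ltW.
have := leakage_typical_ge hX hK (henc n) (@hinj n) err
  (HN1 n (leq_trans (leq_maxl _ _) hn') n_gt0) (HN2 n (leq_trans (leq_maxr _ _) hn') n_gt0)
  a0 (pow2_gt0 _) (pow2_gt0 _) ratio_le1.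
rewrite log_ratio; lra.
Qed.

End Converses.

Section Bounds.
Variable R : realType.
Variables F1 F2 : finType.
Variables (z1 : F1) (z2 : F2).
Variables pX pK : F1 * F2 -> R.
Hypotheses (hX : is_pmf pX) (hK : is_pmf pK).
Variables (sys : forall n, system F1 F2 n) (eps d : R) (r : R * R).
Hypothesis eps01 : 0 < eps < 1.
Hypothesis sys_perf : forall eta, 0 < eta -> exists n0, forall n, (n0 <= n)%N -> (0 < n)%N ->
  [/\ err_prob pX (sys n) <= eps,
      log2 (#|C1 (sys n)|%:R) <= n%:R * (r.1 + 2%:R * eta),
      log2 (#|C2 (sys n)|%:R) <= n%:R * (r.2 + 2%:R * eta),
      log2 (#|C1 (sys n)| * #|C2 (sys n)|)%:R <= n%:R * (r.1 + r.2 + 2%:R * eta) &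
      leakage pX pK (sys n) <= d].

(* Any fixed key works for the rate bounds: the decoder does not need it. *)
Definition key0 n : seqn F1 n * seqn F2 n := ([ffun=> z1], [ffun=> z2]).

Lemma sys_reliable_secure : exists n0, forall n, (n0 <= n)%N -> (0 < n)%N ->
  err_prob pX (sys n) <= eps /\ leakage pX pK (sys n) <= d.
Proof.
have [n0 Hn0] := sys_perf ltr01.
by exists n0 => n hn n_gt0; have [] := Hn0 n hn n_gt0.
Qed.

Lemma rate1_ge : H1given2 pX <= r.1.
Proof.
rewrite -(cross_entropy_cond1 hX).
apply: (rate_converse hX (sys := sys) (sp := split_given2 hX) (Z := fun n => C1 (sys n))
  (f := fun n x => Phi1 (sys n) (key0 n).1 x.1)
  eps01 (cond1_gt0 hX)).
  move=> n x x' cx cx' e1 e2; apply: (correct_inj (k2 := (key0 n).2) cx cx' e2).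
  by have -> : x.2 = x'.2 := e1.
move=> eta he; have [n0 Hn0] := sys_perf he.
by exists n0 => n hn n_gt0; have [] := Hn0 n hn n_gt0.
Qed.

Lemma rate2_ge : H2given1 pX <= r.2.
Proof.
rewrite -(cross_entropy_cond2 hX).
apply: (rate_converse hX (sys := sys) (sp := split_given1 hX) (Z := fun n => C2 (sys n))
  (f := fun n x => Phi2 (sys n) (key0 n).2 x.2)
  eps01 (cond2_gt0 hX)).
  move=> n x x' cx cx' e1 e2; apply: (correct_inj (k1 := (key0 n).1) cx cx' _ e2).
  by have -> : x.1 = x'.1 := e1.
move=> eta he; have [n0 Hn0] := sys_perf he.
by exists n0 => n hn n_gt0; have [] := Hn0 n hn n_gt0.
Qed.

Lemma rate12_ge : H12 pX <= r.1 + r.2.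
Proof.
rewrite -(cross_entropy_self pX).
apply: (rate_converse hX (sys := sys) (sp := split_none pX)
  (Z := fun n => (C1 (sys n) * C2 (sys n))%type) (f := fun n => encrypt (sys n) (key0 n))
  eps01 (fun _ h => h)).
  by move=> n x x' cx cx' _ [e1 e2]; exact: correct_inj cx cx' e1 e2.
move=> eta he; have [n0 Hn0] := sys_perf he.
by exists n0 => n hn n_gt0; have [? _ _ ? _] := Hn0 n hn n_gt0; rewrite card_prod.
Qed.

Lemma key1_ge : H1given2 pX <= H1 pK.
Proof.
rewrite -(cross_entropy_cond1 hX) -(cross_entropy_marg1 pK).
apply: (key_converse hX hK (sys := sys) (sp := split_given2 hX) (mk := marg_fst hK)
  (compat := fun n kp x c => Phi1 (sys n) kp x.1 == c.1) eps01 (cond1_gt0 hX) (marg1_gt0 hK)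
  _ _ sys_reliable_secure) => // n kp c x x' cx cx' e /eqP f /eqP f'.
have e2 : x.2 = x'.2 := e.
by apply: (correct_inj (k1 := kp) (k2 := (key0 n).2) cx cx'); rewrite ?f ?f' ?e2.
Qed.

Lemma key2_ge : H2given1 pX <= H2 pK.
Proof.
rewrite -(cross_entropy_cond2 hX) -(cross_entropy_marg2 pK).
apply: (key_converse hX hK (sys := sys) (sp := split_given1 hX) (mk := marg_snd hK)
  (compat := fun n kp x c => Phi2 (sys n) kp x.2 == c.2) eps01 (cond2_gt0 hX) (marg2_gt0 hK)
  _ _ sys_reliable_secure) => // n kp c x x' cx cx' e /eqP f /eqP f'.
have e1 : x.1 = x'.1 := e.
by apply: (correct_inj (k1 := (key0 n).1) (k2 := kp) cx cx'); rewrite ?f ?f' ?e1.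
Qed.

Lemma key12_ge : H12 pX <= H12 pK.
Proof.
rewrite -(cross_entropy_self pX) -(cross_entropy_self pK).
apply: (key_converse hX hK (sys := sys) (sp := split_none pX) (mk := marg_id hK)
  (compat := fun n k x c => encrypt (sys n) k x == c) eps01 (fun _ h => h) (fun _ h => h)
  _ _ sys_reliable_secure) => // n k c x x' cx cx' _ /eqP f /eqP f'.
by move: f; rewrite -f' /encrypt => -[e1 e2]; exact: correct_inj cx cx' e1 e2.
Qed.

End Bounds.

Lemma Rstar_eventually (R : realType) (F1 F2 : finType) (z1 : F1) (z2 : F2)
    (pX pK : F1 * F2 -> R) (eps delta : R) (r : R * R) :
  Rstar pX pK eps delta r -> exists sys : forall n, system F1 F2 n,
  forall eta, 0 < eta -> exists n0, forall n, (n0 <= n)%N -> (0 < n)%N ->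
  [/\ err_prob pX (sys n) <= eps,
      log2 (#|C1 (sys n)|%:R) <= n%:R * (r.1 + 2%:R * eta),
      log2 (#|C2 (sys n)|%:R) <= n%:R * (r.2 + 2%:R * eta),
      log2 (#|C1 (sys n)| * #|C2 (sys n)|)%:R <= n%:R * (r.1 + r.2 + 2%:R * eta) &
      leakage pX pK (sys n) <= delta].
Proof.
move=> [sys Hs]; exists sys => eta eta0; have [n0 Hn0] := Hs eta eta0.
exists n0 => n hn n_gt0; have [h1 h2 h3 h4] := Hn0 n hn n_gt0.
have nR : 0 < n%:R :> R by rewrite ltr0n.
have neta : 0 <= n%:R * eta by rewrite mulr_ge0 // ltW.
rewrite ler_pdivrMr // in h1; rewrite ler_pdivrMr // in h2.
have c1 : 0 < #|C1 (sys n)|%:R :> R.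
  by rewrite ltr0n; apply/card_gt0P; exists (Phi1 (sys n) [ffun=> z1] [ffun=> z1]).
have c2 : 0 < #|C2 (sys n)|%:R :> R.
  by rewrite ltr0n; apply/card_gt0P; exists (Phi2 (sys n) [ffun=> z2] [ffun=> z2]).
split=> //; try lra.
by rewrite natrM log2M //; lra.
Qed.

(* The witness is a corner point of the Slepian-Wolf pentagon. *)
Lemma pentagons_meet (R : realType) (a1 a2 a12 b1 b2 b12 : R) :
  a1 <= b1 -> a2 <= b2 -> a12 <= b12 -> a1 + a2 <= a12 -> b12 <= b1 + b2 ->
  exists x y, [/\ x <= b1, y <= b2 & x + y <= b12] /\ [/\ a1 <= x, a2 <= y & a12 <= x + y].
Proof.
move=> h1 h2 h3 h4 h5.
have [hx|hx] := leP a1 (a12 - b2).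
  have [hy|hy] := leP a2 (a12 - (a12 - b2)).
    by exists (a12 - b2), (a12 - (a12 - b2)); split; split; lra.
  by exists (a12 - b2), a2; split; split; lra.
have [hy|hy] := leP a2 (a12 - a1).
  by exists a1, (a12 - a1); split; split; lra.
by exists a1, a2; split; split; lra.
Qed.

Local Open Scope classical_set_scope.

Theorem theorem3 (R : realType) (F1 F2 : finFieldType)
  (pX pK : F1 * F2 -> R) (delta0 : R) :
  is_pmf pX -> is_pmf pK -> 0 < delta0 ->
  forall eps delta : R, 0 < eps < 1 -> 0 <= delta <= delta0 ->
  Rstar pX pK eps delta `<=` Rout pX pK.
Proof.
(* Only [leakage <= delta] matters. *)
move=> hX hK _ eps delta eps01 _ r /(Rstar_eventually 0 0) [sys perf].
have rsw : Rsw pX r.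
  by split; [exact: (rate1_ge 0 0 hX eps01 perf) | exact: (rate2_ge 0 0 hX eps01 perf)
           | exact: (rate12_ge 0 0 hX eps01 perf)].
rewrite /Rout; case: pselect => // nE; apply: nE.
have sw_corner : H1given2 pX + H2given1 pX <= H12 pX.
  by have := entropy_subadditive hX; rewrite /H1given2 /H2given1; lra.
have [x [y [key sw]]] := pentagons_meet (key1_ge 0 0 hX hK eps01 perf)
  (key2_ge 0 0 hX hK eps01 perf) (key12_ge hX hK eps01 perf) sw_corner
  (entropy_subadditive hK).
by exists (x, y).
Qed.
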